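(* Let $s,d,k,q$ be positive integers with $q\ge s$ and $d\mid(q-s)$. Define $t_i=q$ if $d\mid i$ and $t_i=s$ if $d\nmid i$, for $1\le i\le k$. Then $$C_k(t_1,\dots,t_k)\le\left(s+k+\frac{q-s}{d}-1\right)_k.$$
   Context: For nonnegative integers $c_1,\dots,c_k$ with $\sum_i ic_i=k$, let $N(c_1,\dots,c_k)=\frac{k!}{1^{c_1}c_1!\,2^{c_2}c_2!\cdots k^{c_k}c_k!}$ be the number of permutations in the symmetric group $S_k$ having exactly $c_i$ cycles of length $i$ for each $i$. Define $C_k(t_1,\dots,t_k)=\sum_{\sum ic_i=k}N(c_1,\dots,c_k)t_1^{c_1}\cdots t_k^{c_k}$. For real $t$, $(t)_k=t(t-1)\cdots(t-k+1)$. *)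

From mathcomp Require Import all_boot all_order all_algebra.
Set Implicit Arguments. Unset Strict Implicit. Unset Printing Implicit Defensive.
Import Order.TTheory GRing.Theory Num.Theory.
Local Open Scope ring_scope.

(* A cycle type for S_k is encoded as c : {ffun 'I_k -> 'I_k.+1}, where
   c i is the number c_{i+1} of cycles of length i+1 (each c_j <= k, so the
   bound 'I_k.+1 loses nothing). *)
Definition cycle_type_ok (k : nat) (c : {ffun 'I_k -> 'I_k.+1}) : bool :=
  (\sum_(i < k) (i.+1 * c i)%N)%N == k.

(* N(c_1,...,c_k) = k! / prod_j (j^{c_j} c_j!)  (natural-number division;
   the division is exact, being the number of permutations of that type). *)
Definition Ncyc (k : nat) (c : {ffun 'I_k -> 'I_k.+1}) : nat :=
  (k`! %/ \prod_(i < k) (i.+1 ^ c i * (c i)`!))%N.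

Definition Ck {R : ringType} (k : nat) (t : nat -> R) : R :=
  \sum_(c : {ffun 'I_k -> 'I_k.+1} | cycle_type_ok c)
     (Ncyc c)%:R * \prod_(i < k) (t i.+1) ^+ (c i).

Definition falling {R : ringType} (x : R) (k : nat) : R :=
  \prod_(j < k) (x - j%:R).

From mathcomp Require Import all_boot all_order all_algebra.
From mathcomp Require Import ring.
Set Implicit Arguments. Unset Strict Implicit. Unset Printing Implicit Defensive.
Import Order.TTheory GRing.Theory Num.Theory.
Local Open Scope ring_scope.

(* C_k(t) / k! is the coefficient of X^k in exp (sum_i t_i X^i / i).  For the
   periodic t of the theorem, with m = (q - s) / d, this series factors as
   (1 - X)^-s (1 - X^d)^-m; the coefficients of (1 - X^d)^-m are dominated by
   those of (1 - X)^-m, and the coefficient of X^k in (1 - X)^-(s + m) is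
   (s + m + k - 1)_k / k!.  All series are truncated polynomials, each being
   identified by the equation X F' = F S (mod X^(K+1)) and its constant term. *)

Section LogDerivative.
Variable R : comRingType.

Definition vanish_upto K (E : {poly R}) := forall n, (n <= K)%N -> E`_n = 0.

Definition logder_upto K (F S : {poly R}) := vanish_upto K ('X * F^`() - F * S).

Lemma vanish_uptoMr K E G : vanish_upto K E -> vanish_upto K (E * G).
Proof.
move=> hE n hn; rewrite coefM big1 // => j _; rewrite hE ?mul0r //.
by apply: leq_trans hn; rewrite -ltnS.
Qed.

Lemma vanish_uptoD K E G : vanish_upto K E -> vanish_upto K G -> vanish_upto K (E + G).
Proof. by move=> hE hG n hn; rewrite coefD hE ?hG ?addr0. Qed.

Lemma logder_uptoM K F G S T :
  logder_upto K F S -> logder_upto K G T -> logder_upto K (F * G) (S + T).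
Proof.
move=> hF hG; rewrite /logder_upto.
have -> : 'X * (F * G)^`() - F * G * (S + T) =
    ('X * F^`() - F * S) * G + ('X * G^`() - G * T) * F by rewrite derivM; ring.
by apply: vanish_uptoD; apply: vanish_uptoMr.
Qed.

Lemma logder_upto_eq K F S T :
  logder_upto K F S -> vanish_upto K (S - T) -> logder_upto K F T.
Proof.
move=> hF hST; rewrite /logder_upto.
have -> : 'X * F^`() - F * T = ('X * F^`() - F * S) + (S - T) * F by ring.
by apply: vanish_uptoD => //; apply: vanish_uptoMr.
Qed.

Lemma logder_upto_prod K (I : finType) (F S : I -> {poly R}) :
  (forall i, logder_upto K (F i) (S i)) ->
  logder_upto K (\prod_i F i) (\sum_i S i).
Proof.
move=> h; apply: (big_ind2 (logder_upto K)) => // [|? ? ? ? ? ?].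
  by move=> n _; rewrite derivC !mulr0 subr0 coef0.
exact: logder_uptoM.
Qed.

Lemma coef_logder (F S : {poly R}) n :
  ('X * F^`() - F * S)`_n = F`_n *+ n - \sum_(j < n.+1) F`_j * S`_(n - j).
Proof.
by rewrite coefB coefXM coefM; case: n => [|n] //=; rewrite ?mulr0n // coef_deriv.
Qed.

Lemma logder_uptoP K (F S : {poly R}) :
  (forall n, (n <= K)%N -> F`_n *+ n = \sum_(j < n.+1) F`_j * S`_(n - j)) ->
  logder_upto K F S.
Proof. by move=> h n hn; rewrite coef_logder h // subrr. Qed.

End LogDerivative.

(* In characteristic 0 the equation n F_n = sum_(j <= n) F_j S_(n-j) with
   S_0 = 0 determines F_n from F_0, ..., F_(n-1). *)
Lemma logder_upto_uniq (R : numDomainType) K (F G S : {poly R}) :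
  logder_upto K F S -> logder_upto K G S -> S`_0 = 0 -> F`_0 = G`_0 ->
  forall n, (n <= K)%N -> F`_n = G`_n.
Proof.
move=> hF hG hS0 h0.
have hFG : logder_upto K (F - G) S.
  move=> n hn.
  have -> : 'X * (F - G)^`() - (F - G) * S =
      ('X * F^`() - F * S) - ('X * G^`() - G * S) by rewrite derivB; ring.
  by rewrite coefB hF ?hG ?subr0.
suff H n : (n <= K)%N -> forall j, (j <= n)%N -> (F - G)`_j = 0.
  by move=> n hn; apply/eqP; rewrite -subr_eq0 -coefB (H n hn n).
elim: n => [|n IH] hn j.
  by rewrite leqn0 => /eqP ->; rewrite coefB h0 subrr.
rewrite leq_eqVlt => /orP [/eqP ->|]; last by rewrite ltnS; apply: IH; apply: ltnW.
have := hFG n.+1 hn; rewrite coef_logder big_ord_recr /= subnn hS0 mulr0 addr0.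
rewrite big1 ?subr0 => [/eqP|i _]; first by rewrite mulrn_eq0 /= => /eqP.
by rewrite IH ?mul0r // ?(ltnW hn) // -ltnS.
Qed.

Section NegativeBinomial.
Variable R : numFieldType.

Definition tail_poly K (f : nat -> R) : {poly R} :=
  \poly_(i < K.+1) (if i == 0%N then 0 else f i).

Definition multichoose (a : R) n := \prod_(j < n) ((a + j%:R) / j.+1%:R).

(* The expansions of (1 - X)^-a and (1 - X^d)^-a, truncated at degree K. *)
Definition negbin K a : {poly R} := \poly_(n < K.+1) multichoose a n.

Definition negbin_dil K d a : {poly R} :=
  \poly_(n < K.+1) (if (d %| n)%N then multichoose a (n %/ d) else 0).

Lemma coef_tail_poly0 K f : (tail_poly K f)`_0 = 0.
Proof. by rewrite coef_poly. Qed.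

Lemma multichoose0 a : multichoose a 0 = 1.
Proof. by rewrite /multichoose big_ord0. Qed.

Lemma multichooseS a n :
  multichoose a n.+1 = multichoose a n * ((a + n%:R) / n.+1%:R).
Proof. by rewrite /multichoose big_ord_recr. Qed.

Lemma multichoose_sum a n :
  multichoose a n *+ n = a * \sum_(j < n) multichoose a j.
Proof.
elim: n => [|n IH]; first by rewrite big_ord0 mulr0 mulr0n.
rewrite multichooseS big_ord_recr /= mulrDr -IH -mulrnAr -[(_ / _) *+ _]mulr_natr.
by rewrite divfK ?pnatr_eq0 // mulrDr mulr_natr addrC mulrC.
Qed.

Lemma fact_multichoose a k : k`!%:R * multichoose a k = \prod_(j < k) (a + j%:R).
Proof.
elim: k => [|k IH]; first by rewrite multichoose0 big_ord0 mulr1.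
rewrite factS natrM multichooseS big_ord_recr /= -IH.
by field; rewrite addrC natr1 pnatr_eq0.
Qed.

Lemma multichoose_ge0 a n : 0 <= a -> 0 <= multichoose a n.
Proof.
by move=> ha; apply: prodr_ge0 => j _; rewrite divr_ge0 ?addr_ge0 ?ler0n.
Qed.

Lemma multichoose_nondecreasing a n p :
  1 <= a -> (n <= p)%N -> multichoose a n <= multichoose a p.
Proof.
move=> ha; elim: p => [|p IH]; first by rewrite leqn0 => /eqP ->.
rewrite leq_eqVlt => /orP [/eqP ->//|]; rewrite ltnS => /IH h.
apply: (le_trans h); rewrite multichooseS ler_peMr ?multichoose_ge0 ?(le_trans ler01) //.
by rewrite ler_pdivlMr ?ltr0n // mul1r -natr1 addrC lerD2r.
Qed.

Lemma coef_negbin0 K a : (negbin K a)`_0 = 1.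
Proof. by rewrite coef_poly multichoose0. Qed.

Lemma coef_negbin_dil0 K d a : (negbin_dil K d a)`_0 = 1.
Proof. by rewrite coef_poly dvdn0 div0n multichoose0. Qed.

Lemma logder_negbin K a : logder_upto K (negbin K a) (tail_poly K (fun _ => a)).
Proof.
apply: logder_uptoP => n hn.
rewrite coef_poly ltnS hn big_ord_recr /= subnn coef_tail_poly0 mulr0 addr0.
rewrite multichoose_sum mulr_sumr; apply: eq_bigr => j _.
have hj : (j < K.+1)%N by rewrite ltnS (leq_trans (ltnW (ltn_ord j)) hn).
have hnj : (n - j < K.+1)%N by rewrite ltnS (leq_trans (leq_subr _ _) hn).
by rewrite !coef_poly hj hnj subn_eq0 leqNgt ltn_ord /= mulrC.
Qed.

Lemma big_ord_dvdn d N (f : nat -> R) : (0 < d)%N ->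
  \sum_(j < d * N) (if (d %| j)%N then f (j %/ d)%N else 0) = \sum_(i < N) f i.
Proof.
case: d => // d _; elim: N => [|N IH]; first by rewrite muln0 !big_ord0.
rewrite mulnS addnC big_split_ord /= IH [RHS]big_ord_recr /=; congr (_ + _).
rewrite big_ord_recl /= addn0 dvdn_mulr // mulKn // big1 ?addr0 // => i _.
rewrite /bump /= add1n dvdn_addr ?dvdn_mulr //.
by case: ifP => // /(dvdn_leq (ltn0Sn _)); rewrite ltnS leqNgt ltn_ord.
Qed.

Lemma logder_negbin_dil K d a : (0 < d)%N ->
  logder_upto K (negbin_dil K d a)
    (tail_poly K (fun i => if (d %| i)%N then d%:R * a else 0)).
Proof.
move=> hd; apply: logder_uptoP => n hn.
rewrite coef_poly ltnS hn big_ord_recr /= subnn coef_tail_poly0 mulr0 addr0.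
set S := tail_poly _ _.
have summandE (j : 'I_n) : (negbin_dil K d a)`_j * S`_(n - j) =
    if (d %| n)%N && (d %| j)%N then multichoose a (j %/ d) * (d%:R * a) else 0.
  have hj : (j < K.+1)%N by rewrite ltnS (leq_trans (ltnW (ltn_ord j)) hn).
  have hnj : (n - j < K.+1)%N by rewrite ltnS (leq_trans (leq_subr _ _) hn).
  rewrite !coef_poly hj hnj subn_eq0 leqNgt ltn_ord /=.
  have [dj|] := boolP (d %| j)%N; last by rewrite andbF mul0r.
  by rewrite andbT dvdn_subl ?(ltnW (ltn_ord j)) //; case: ifP; rewrite ?mulr0.
rewrite (eq_bigr _ (fun j _ => summandE j)).
have [/dvdnP [N ->]|_] := boolP (d %| n)%N; last by rewrite big1 // mul0rn.
rewrite mulnK // mulnC /= (big_ord_dvdn _ (fun i => multichoose a i * (d%:R * a))) //.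
rewrite mulnC mulrnA multichoose_sum.
by rewrite -mulr_suml -mulr_natr; ring.
Qed.

Lemma negbinD_upto K a b n : (n <= K)%N ->
  (negbin K a * negbin K b)`_n = (negbin K (a + b))`_n.
Proof.
move=> hn.
apply: (logder_upto_uniq _ (logder_negbin _) (coef_tail_poly0 _ _) _ hn).
  apply: logder_upto_eq (logder_uptoM (logder_negbin a) (logder_negbin b)) _.
  move=> i _; rewrite coefB coefD !coef_poly.
  by case: (i < K.+1)%N; case: (i == 0)%N; rewrite ?addr0 subrr.
by rewrite coef0M !coef_negbin0 mulr1.
Qed.

Lemma coef_negbin_dil_le K d (m : nat) n : (0 < d)%N ->
  (negbin_dil K d m%:R)`_n <= (negbin K m%:R)`_n.
Proof.
move=> hd; rewrite !coef_poly; case: ifP => // _.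
have hm0 : 0 <= m%:R :> R by rewrite ler0n.
case: ifP => [dn|]; last by rewrite multichoose_ge0.
case: (posnP n) => [->|n_gt0]; first by rewrite div0n.
case: (posnP m) => [m0|m_gt0].
  have : (0 < n %/ d)%N by rewrite divn_gt0 // dvdn_leq.
  case: (n %/ d)%N => // p _.
  rewrite /multichoose big_ord_recl m0 mulr0n add0r !mul0r.
  exact: multichoose_ge0.
by apply: multichoose_nondecreasing; [rewrite ler1n | exact: leq_div].
Qed.

Lemma coef_negbinM_dil_le K d a (m : nat) n : 0 <= a -> (0 < d)%N ->
  (negbin K a * negbin_dil K d m%:R)`_n <= (negbin K a * negbin K m%:R)`_n.
Proof.
move=> ha hd; rewrite !coefM; apply: ler_sum => j _; apply: ler_wpM2l.
  by rewrite coef_poly; case: ifP => // _; rewrite multichoose_ge0.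
exact: coef_negbin_dil_le.
Qed.

End NegativeBinomial.

Section CycleIndex.
Variable R : numFieldType.

Definition exp_poly K (c : R) e := \sum_(j < K.+1) (c ^+ j / j`!%:R) *: 'X^(e * j).

(* The exponential generating function exp (sum_i t_i X^i / i) of the C_k,
   truncated; its coefficient of X^k is C_k(t) / k!. *)
Definition cycle_egf K (t : nat -> R) :=
  \prod_(i < K) exp_poly K (t i.+1 / i.+1%:R) i.+1.

Lemma logder_exp_poly K c e : (0 < e)%N ->
  logder_upto K (exp_poly K c e) ((e%:R * c) *: 'X^e).
Proof.
move=> he.
have XD : 'X * (exp_poly K c e)^`() =
    \sum_(j < K) ((e%:R * c) * (c ^+ j / j`!%:R)) *: 'X^(e * j.+1).
  rewrite /exp_poly raddf_sum mulr_sumr big_ord_recl /= derivZ derivXn muln0.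
  rewrite mulr0n scaler0 mulr0 add0r; apply: eq_bigr => j _.
  rewrite /bump /= add1n derivZ derivXn -scalerAr mulrnAr -exprS prednK ?muln_gt0 ?he //.
  rewrite -scalerMnr scalerMnl factS natrM exprS -mulr_natr natrM; congr (_ *: _).
  by field; rewrite addrC natr1 !pnatr_eq0 -lt0n fact_gt0.
have FS : exp_poly K c e * ((e%:R * c) *: 'X^e) =
    \sum_(j < K.+1) ((e%:R * c) * (c ^+ j / j`!%:R)) *: 'X^(e * j.+1).
  rewrite /exp_poly mulr_suml; apply: eq_bigr => i _.
  by rewrite -scalerAr -scalerAl scalerA -exprD mulnS addnC mulrC.
rewrite /logder_upto XD FS big_ord_recr /= opprD addrA subrr sub0r => n hn.
rewrite coefN coefZ coefXn.
have : (n < e * K.+1)%N by apply: (leq_trans _ (leq_pmull _ he)); rewrite ltnS.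
by rewrite ltn_neqAle => /andP [/negbTE -> _]; rewrite mulr0 oppr0.
Qed.

Lemma logder_cycle_egf K t : logder_upto K (cycle_egf K t) (tail_poly K t).
Proof.
apply: logder_upto_eq; first by apply: logder_upto_prod => i; apply: logder_exp_poly.
move=> n hn; rewrite coefB coef_sum coef_poly ltnS hn.
under eq_bigr => i _ do rewrite coefZ coefXn [_%:R * (_ / _)]mulrC divfK ?pnatr_eq0 //.
case: n hn => [|n] hn; first by rewrite big1 ?subr0 // => i _; rewrite mulr0.
rewrite (bigD1 (Ordinal hn)) //= eqxx mulr1 big1 ?addr0 ?subrr // => i /eqP ni.
by case: eqP => [[in_]|]; rewrite ?mulr0 //; case: ni; apply: val_inj.
Qed.

Lemma coef_cycle_egf0 K t : (cycle_egf K t)`_0 = 1.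
Proof.
rewrite -horner_coef0 horner_prod big1 // => i _.
rewrite horner_sum big_ord_recl /= hornerZ hornerXn muln0 !expr0 mulr1 divr1.
rewrite big1 ?addr0 // => j _; rewrite hornerZ hornerXn expr0n.
by rewrite muln_eq0 /= mulr0.
Qed.

(* Equality holds, but only the inequality is needed, and it avoids proving
   that the division in Ncyc is exact. *)
Lemma Ck_le_coef_cycle_egf k t : (forall i, 0 <= t i) ->
  Ck k t <= k`!%:R * (cycle_egf k t)`_k.
Proof.
move=> t_ge0; rewrite /cycle_egf /exp_poly bigA_distr_bigA coef_sum mulr_sumr.
rewrite /Ck big_mkcond /=; apply: ler_sum => c _.
set u := fun i : 'I_k => t i.+1 / i.+1%:R.
set w := (\prod_(i < k) (i.+1 ^ c i * (c i)`!))%N.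
set T := \prod_(i < k) t i.+1 ^+ c i.
have coefE : (\prod_(i < k) ((u i ^+ c i / (c i)`!%:R) *: 'X^(i.+1 * c i)))`_k =
    T / w%:R * (cycle_type_ok c)%:R.
  rewrite (eq_bigr (fun i => (u i ^+ c i / (c i)`!%:R)%:P * 'X^(i.+1 * c i)));
    last by move=> i _; rewrite mul_polyC.
  rewrite big_split /= -rmorph_prod prodrXr coefCM coefXn eq_sym natr_prod -prodf_div.
  congr (_ * _); apply: eq_bigr => i _.
  by rewrite natrM natrX expr_div_n -mulrA -invfM.
rewrite coefE; case: (cycle_type_ok c); rewrite ?mulr0 // mulr1.
have w_gt0 : 0 < w%:R :> R.
  by rewrite ltr0n prodn_gt0 // => i; rewrite muln_gt0 expn_gt0 fact_gt0.
rewrite mulrA mulrAC; apply: ler_wpM2r; first by rewrite prodr_ge0 // => i _; rewrite exprn_ge0.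
by rewrite ler_pdivlMr // -natrM ler_nat leq_divM.
Qed.

Lemma coef_cycle_egf_periodic K d (a b : R) n : (0 < d)%N -> (n <= K)%N ->
  (cycle_egf K (fun i => if (d %| i)%N then a + d%:R * b else a))`_n =
  (negbin K a * negbin_dil K d b)`_n.
Proof.
move=> hd hn; apply: (logder_upto_uniq (logder_cycle_egf _) _ (coef_tail_poly0 _ _) _ hn).
  apply: logder_upto_eq (logder_uptoM (logder_negbin a) (logder_negbin_dil b hd)) _.
  move=> i _; rewrite coefB coefD !coef_poly.
  by case: (i < K.+1)%N; case: (i == 0)%N; case: (d %| i)%N; rewrite ?addr0 subrr.
by rewrite coef0M coef_cycle_egf0 coef_negbin0 coef_negbin_dil0 mulr1.
Qed.

End CycleIndex.

Lemma prod_rising_falling (R : comRingType) (a : R) k :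
  \prod_(j < k) (a + j%:R) = falling (a + k%:R - 1) k.
Proof.
rewrite /falling [RHS](reindex_inj rev_ord_inj); apply: eq_bigr => j _ /=.
by rewrite natrB // -natr1; ring.
Qed.

Theorem mainTheorem5 (R : realFieldType) (s d k q : nat) :
  (0 < s)%N -> (0 < d)%N -> (0 < k)%N -> (0 < q)%N ->
  (s <= q)%N -> (d %| q - s)%N ->
  Ck k (fun i : nat => if (d %| i)%N then q%:R else s%:R : R)
  <= falling (s%:R + k%:R + (q - s)%:R / d%:R - 1) k.
Proof.
move=> _ hd _ _ hsq hdv; set m := ((q - s) %/ d)%N.
have -> : q%:R = s%:R + d%:R * m%:R :> R.
  by rewrite -natrM -natrD mulnC divnK ?subnKC.
have -> : (q - s)%:R / d%:R = m%:R :> R.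
  by rewrite -{1}(divnK hdv) natrM mulfK // pnatr_eq0 -lt0n.
apply: le_trans (Ck_le_coef_cycle_egf k _) _ => [i|].
  by case: ifP; rewrite ?addr_ge0 ?mulr_ge0 ?ler0n.
rewrite coef_cycle_egf_periodic //.
apply: le_trans (ler_wpM2l (ler0n _ _) (coef_negbinM_dil_le _ _ _ (ler0n _ _) hd)) _.
rewrite negbinD_upto // coef_poly ltnSn fact_multichoose prod_rising_falling.
by rewrite [s%:R + m%:R + _]addrAC.
Qed.
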